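(* Let $G_1$ and $G_2$ be connected graphs, where $G_1$ has at least two vertices. Then $$\chi_d^t(G_1\star G_2)\leq \chi_d^t(G_1)+|V(G_2)|.$$
   Context: All graphs are simple and finite. A total dominator coloring (TD-coloring) of a graph $G$ with no isolated vertex is a proper vertex coloring of $G$ in which every vertex of $G$ is adjacent to every vertex of some color class (a color class being the set of all vertices receiving a given color). The total dominator chromatic number (TDC-number) $\chi_d^t(G)$ is the minimum number of colors in a TD-coloring of $G$. The neighbourhood corona $G_1\star G_2$ of graphs $G_1$ and $G_2$ is the graph obtained by taking one copy of $G_1$ and $|V(G_1)|$ copies of $G_2$, and, for each $i$, joining every neighbour (in $G_1$) of the $i$-th vertex of $G_1$ to every vertex of the $i$-th copy of $G_2$. *)

From mathcomp Require Import all_boot.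
Set Implicit Arguments. Unset Strict Implicit. Unset Printing Implicit Defensive.

Definition simple_graph (T : finType) (e : rel T) : Prop :=
  symmetric e /\ irreflexive e.

Definition connected_graph (T : finType) (e : rel T) : Prop :=
  forall x y : T, connect e x y.

Definition proper_coloring (T : finType) (C : eqType) (e : rel T) (c : T -> C) : bool :=
  [forall x, forall y, e x y ==> (c x != c y)].

Definition td_coloring (T : finType) (C : finType) (e : rel T) (c : T -> C) : bool :=
  proper_coloring e c &&
  [forall x, exists k : C, [exists y, c y == k] &&
                           [forall y, (c y == k) ==> e x y]].

Definition num_colors (T : finType) (C : finType) (c : T -> C) : nat :=
  #|[set c x | x : T]|.

(* WLOG colors are taken in 'I_#|T| (any coloring of T uses at most #|T|
   colors and can be relabeled).  The default #|T|.+1 is only reached when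
   no TD-coloring exists (graph with an isolated vertex). *)
Definition tdc_number (T : finType) (e : rel T) : nat :=
  \big[minn/#|T|.+1]_(c : {ffun T -> 'I_#|T|} | td_coloring e c) num_colors c.

(* Neighbourhood corona G1 * G2: vertices are inl v (copy of G1) and
   inr (i, x) (vertex x of the i-th copy of G2). *)
Definition ncorona_rel (T1 T2 : finType) (e1 : rel T1) (e2 : rel T2)
  : rel (T1 + (T1 * T2)) :=
  fun u v =>
    match u, v with
    | inl a, inl b => e1 a b
    | inr (i, x), inr (j, y) => (i == j) && e2 x y
    | inl a, inr (i, _) => e1 a i
    | inr (i, _), inl a => e1 i a
    end.

From mathcomp Require Import all_boot all_order.
Import Order.TTheory.

Set Implicit Arguments.
Unset Strict Implicit.
Unset Printing Implicit Defensive.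

(* Colour the copy of G1 with an optimal TD-colouring c of G1 and give the
   vertex x of every copy of G2 a fresh colour depending on x alone; this uses
   at most |V(G2)| new colours.  The colouring is proper because the fresh
   colours differ within each copy of G2 and copies of G2 are pairwise
   non-adjacent.  It is total dominating because the vertex x of the i-th copy
   has exactly the neighbours of i inside the copy of G1, so the colour class
   of c dominating i (which contains no fresh vertex) dominates it as well.
   An optimal c exists because a connected graph on at least two vertices has
   no isolated vertex, so that colouring every vertex differently is a
   TD-colouring. *)

Lemma tdc_number_le (T : finType) (e : rel T) (c : {ffun T -> 'I_#|T|}) :
  td_coloring e c -> tdc_number e <= num_colors c.
Proof.
by move=> tdc; rewrite /tdc_number -minEnat; apply: (bigmin_le_cond (T := nat)).
Qed.

Lemma tdc_number_attained (T : finType) (e : rel T) (c0 : {ffun T -> 'I_#|T|}) :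
  td_coloring e c0 ->
  exists2 c : {ffun T -> 'I_#|T|}, td_coloring e c & tdc_number e = num_colors c.
Proof.
move=> tdc0; rewrite /tdc_number -minEnat.
case: (eq_bigmin (T := nat) (x := #|T|.+1) c0 (td_coloring e)
    (fun c => num_colors c) tdc0) => [c _|c tdc ->].
  by apply/ltnW; rewrite -[X in _ < X.+1]card_ord ltnS max_card.
by exists c.
Qed.

Lemma connected_has_neighbour (T : finType) (e : rel T) :
  connected_graph e -> 1 < #|T| -> forall a, exists b, e a b.
Proof.
move=> conn_e T_gt1 a.
have [b] : exists b, b != a.
  have : 0 < #|predC1 a| by rewrite cardC1; case: #|T| T_gt1 => [|[|n]].
  by case/card_gt0P => b; exists b.
case/connectP: (conn_e a b) => [[|x p]] /= => [_ -> |/andP[e_ax _] _ _]; last by exists x.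
by rewrite eqxx.
Qed.

Lemma td_coloring_enum_rank (T : finType) (e : rel T) :
  irreflexive e -> (forall a, exists b, e a b) ->
  td_coloring e [ffun a => enum_rank a].
Proof.
move=> irr_e nbr; apply/andP; split.
  apply/forallP => x; apply/forallP => y; apply/implyP => e_xy.
  by rewrite !ffunE; apply: contraL e_xy => /eqP/enum_rank_inj ->; rewrite irr_e.
apply/forallP => a; have [b e_ab] := nbr a.
apply/existsP; exists (enum_rank b); apply/andP; split.
  by apply/existsP; exists b; rewrite ffunE.
by apply/forallP => y; apply/implyP; rewrite ffunE => /eqP/enum_rank_inj ->.
Qed.

Section CoronaColoring.

Variables (T1 T2 : finType) (e1 : rel T1) (e2 : rel T2).
Hypothesis irr_e2 : irreflexive e2.
Variable c : {ffun T1 -> 'I_#|T1|}.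
Hypothesis td_c : td_coloring e1 c.
Hypothesis T1_gt0 : 0 < #|T1|.

Local Notation T := (T1 + T1 * T2)%type.
Local Notation E := (ncorona_rel e1 e2).

Definition corona_color (v : T) : nat :=
  match v with inl a => c a | inr (_, x) => #|T1| + enum_rank x end.

Lemma corona_color_lt v : corona_color v < #|{: T}|.
Proof.
rewrite card_sum card_prod; case: v => [a|[i x]] /=.
  exact: leq_trans (ltn_ord (c a)) (leq_addr _ _).
rewrite ltn_add2l; apply: leq_trans (ltn_ord (enum_rank x)) _.
by rewrite leq_pmull.
Qed.

Definition corona_coloring : {ffun T -> 'I_#|{: T}|} :=
  [ffun v => Ordinal (corona_color_lt v)].

Lemma corona_coloringE v : val (corona_coloring v) = corona_color v.
Proof. by rewrite ffunE. Qed.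

Lemma eq_corona_coloring u v :
  (corona_coloring u == corona_coloring v) = (corona_color u == corona_color v).
Proof. by rewrite -val_eqE /= !corona_coloringE. Qed.

Lemma proper_corona_coloring : proper_coloring E corona_coloring.
Proof.
have /andP[/forallP proper_c _] := td_c.
have fresh a (x : T2) : c a != #|T1| + enum_rank x :> nat.
  by rewrite neq_ltn (leq_trans (ltn_ord (c a))) ?leq_addr.
apply/forallP => u; apply/forallP => v; apply/implyP.
rewrite eq_corona_coloring.
case: u => [a|[i x]]; case: v => [b|[j y]] //= e_uv.
- by have := implyP (forallP (proper_c a) b) e_uv; rewrite -val_eqE.
- by rewrite eq_sym.
- case/andP: e_uv => _ e2_xy; rewrite eqn_add2l.
  by apply: contraL e2_xy => /eqP/ord_inj/enum_rank_inj ->; rewrite irr_e2.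
Qed.

Definition corona_base (v : T) : T1 :=
  match v with inl a => a | inr (i, _) => i end.

Lemma ncorona_rel_inl v b : E v (inl b) = e1 (corona_base v) b.
Proof. by case: v => [?|[? ?]]. Qed.

Lemma td_corona_coloring : td_coloring E corona_coloring.
Proof.
apply/andP; split; first exact: proper_corona_coloring.
have /andP[_ /forallP dom_c] := td_c.
have T1_le : #|T1| <= #|{: T}| by rewrite card_sum leq_addr.
apply/forallP => v.
have [k /andP[/existsP[a0 /eqP c_a0] /forallP dom_k]] := existsP (dom_c (corona_base v)).
apply/existsP; exists (widen_ord T1_le k); apply/andP; split.
  by apply/existsP; exists (inl a0); rewrite -val_eqE /= corona_coloringE /= c_a0.
apply/forallP => -[b|[j x]]; apply/implyP; rewrite -val_eqE /= corona_coloringE /=.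
  by rewrite ncorona_rel_inl val_eqE; apply/implyP/dom_k.
by move=> /eqP fresh_k; have := ltn_ord k; rewrite -fresh_k ltnNge leq_addr.
Qed.

Lemma num_colors_corona_coloring (a0 : T1) :
  num_colors corona_coloring <= num_colors c + #|T2|.
Proof.
have T1_le : #|T1| <= #|{: T}| by rewrite card_sum leq_addr.
have colors_sub : [set corona_coloring v | v : T] \subset
    widen_ord T1_le @: [set c a | a : T1] :|: [set corona_coloring (inr (a0, x)) | x : T2].
  apply/subsetP => _ /imsetP[[a|[i x]] _ ->]; rewrite in_setU.
    apply/orP; left; apply/imsetP; exists (c a); first exact: imset_f.
    by apply: val_inj; rewrite /= corona_coloringE.
  apply/orP; right; apply/imsetP; exists x => //.
  by apply: val_inj; rewrite /= !corona_coloringE.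
rewrite /num_colors; apply: leq_trans (subset_leq_card colors_sub) _.
apply: leq_trans (leq_card_setU _ _) _.
by apply: leq_add; apply: leq_imset_card.
Qed.

End CoronaColoring.

Theorem theorem2 (T1 T2 : finType) (e1 : rel T1) (e2 : rel T2) :
  simple_graph e1 -> simple_graph e2 ->
  connected_graph e1 -> connected_graph e2 ->
  1 < #|T1| ->
  tdc_number (ncorona_rel e1 e2) <= tdc_number e1 + #|T2|.
Proof.
move=> [_ irr_e1] [_ irr_e2] conn_e1 _ T1_gt1.
have T1_gt0 : 0 < #|T1| by apply: ltnW.
have [a0 _] := card_gt0P T1_gt0.
have td_rank := td_coloring_enum_rank irr_e1 (connected_has_neighbour conn_e1 T1_gt1).
have [c td_c ->] := tdc_number_attained td_rank.
apply: leq_trans (num_colors_corona_coloring T2 c T1_gt0 a0).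
exact/tdc_number_le/(td_corona_coloring irr_e2 td_c).
Qed.
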